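(* Let $m\ge 2$, let $\bar l(x)=\sum_{v=0}^{m} b_v x^v$ be a primitive polynomial of degree $m$ over $\mathbb{F}_2$, and let $l(x)=\sum_{v=0}^m b_v x^{2^v}$. Then exactly one of $c_0=\sum_{j\ge0} b_{2j}$ and $c_1=\sum_{j\ge 0} b_{2j+1}$ (with $b_u=0$ for $u>m$) is zero, and the polynomial $$\frac{l(x)^2+l(x)+1}{x^2+x+1}$$ is an irreducible polynomial of degree $2(2^m-1)$ over $\mathbb{F}_2$.
   Context: A primitive polynomial of degree $m$ over $\mathbb{F}_2$ is a monic irreducible polynomial of degree $m$ whose roots generate $\mathbb{F}_{2^m}^*$. *)

From HB Require Import structures.
From mathcomp Require Import all_boot all_order all_algebra.
Set Implicit Arguments. Unset Strict Implicit. Unset Printing Implicit Defensive.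
Import GRing.Theory.
Local Open Scope ring_scope.

(* A primitive polynomial of degree m over F_2: monic, irreducible, of degree m,
   and its root (the class of 'X in F_2[x]/(p) = F_{2^m}) has multiplicative
   order 2^m - 1, i.e. generates F_{2^m}^*.  The order of the root is expressed
   as: p divides X^(2^m-1) - 1 and p divides no X^k - 1 with 0 < k < 2^m - 1. *)
Definition primitive_poly (m : nat) (p : {poly 'F_2}) : Prop :=
  [/\ p \is monic, size p = m.+1, irreducible_poly p,
      p %| 'X^(2 ^ m - 1) - 1
    & forall k : nat, (0 < k < 2 ^ m - 1)%N -> ~~ (p %| 'X^k - 1)].

Definition linearized (p : {poly 'F_2}) : {poly 'F_2} :=
  \sum_(v < size p) p`_v *: 'X^(2 ^ v).

Definition c_even (p : {poly 'F_2}) : 'F_2 :=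
  \sum_(j < size p | ~~ odd j) p`_j.
Definition c_odd (p : {poly 'F_2}) : 'F_2 :=
  \sum_(j < size p | odd j) p`_j.

From HB Require Import structures.
From mathcomp Require Import all_boot all_order all_algebra all_field.
Set Implicit Arguments. Unset Strict Implicit. Unset Printing Implicit Defensive.
Import GRing.Theory.
Local Open Scope ring_scope.

(* Write L_g(y) = sum_i g_i y^(2^i) for the linearized associate of g over
   F_2, so that l = L_lbar(X), L is additive in g and L_(gh) = L_g o L_h.  At
   a root w of X^2 + X + 1 the powers w^(2^i) alternate between w and w^2, so
   L_g(w) = c0 w + c1 w^2; as c0 + c1 = lbar(1) = 1 (lbar is irreducible of
   degree >= 2), L_lbar(w) is again such a root, which gives the first two
   claims.
   Let r be an irreducible factor of Q = (l^2 + l + 1) / (X^2 + X + 1) and b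
   the class of X in F_2[X]/(r).  Then w = L_lbar(b) is a root of X^2 + X + 1,
   and b is not, because l^2 + l + 1 has derivative 1, so that Q is coprime to
   X^2 + X + 1.  If b^(2^k) = b then w^(2^k) = w, so k is even; moreover
   d = b^4 + b = (b^2 + b)(b^2 + b + 1) is nonzero and killed both by L_lbar
   (since L_lbar(d) = w^4 + w) and by L_(X^k - 1), so the irreducible lbar
   divides X^k - 1 and 2^m - 1 divides k.  With k = deg r this gives
   deg r >= 2 (2^m - 1) = deg Q. *)

Lemma F2_eq01 (c : 'F_2) : c = 0 \/ c = 1.
Proof. by case: c => [[|[|//]] ?]; [left | right]; apply: val_inj. Qed.

Lemma F2_eq1 (c : 'F_2) : c != 0 -> c = 1.
Proof. by case: (F2_eq01 c) => ->; rewrite ?eqxx. Qed.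

Lemma F2_addr_eq1 (a b : 'F_2) : a + b = 1 -> (a == 0) (+) (b == 0).
Proof. by move: a b; do 2!case=> [[|[|//]] ?]; move/eqP. Qed.

Section Char2Algebra.
Variable A : comAlgType 'F_2.

Lemma pchar_F2alg : 2 \in [pchar A].
Proof. by rewrite (pchar_lalg A) pchar_Fp. Qed.

Lemma addrr_F2alg (a : A) : a + a = 0.
Proof. exact: addrr_pchar2 pchar_F2alg a. Qed.

Lemma frobeniusD n (a b : A) : (a + b) ^+ (2 ^ n) = a ^+ (2 ^ n) + b ^+ (2 ^ n).
Proof.
by rewrite exprDn_pchar // (eq_pnat _ (pcharf_eq pchar_F2alg)) pnatX pnat_id.
Qed.

Lemma frobeniusZ n (c : 'F_2) (a : A) : (c *: a) ^+ (2 ^ n) = c *: a ^+ (2 ^ n).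
Proof.
by rewrite exprZn; case: (F2_eq01 c) => ->; rewrite ?expr1n // expr0n expn_eq0.
Qed.

Lemma expr4D_F2alg (b : A) : b ^+ 4 + b = (b ^+ 2 + b) * (b ^+ 2 + b + 1).
Proof.
rewrite mulrDr mulr1 -expr2 (frobeniusD 1) -exprM addrA -(addrA (b ^+ _ )).
by rewrite addrr_F2alg addr0.
Qed.

Definition lin_eval (g : {poly 'F_2}) (y : A) : A :=
  \sum_(i < size g) g`_i *: y ^+ (2 ^ i).

Lemma lin_eval_widen n (g : {poly 'F_2}) (y : A) : (size g <= n)%N ->
  lin_eval g y = \sum_(i < n) g`_i *: y ^+ (2 ^ i).
Proof.
move=> le_g_n; rewrite /lin_eval.
rewrite (big_ord_widen n (fun i => g`_i *: y ^+ (2 ^ i)) le_g_n) big_mkcond /=.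
by apply: eq_bigr => i _; case: ltnP => // ?; rewrite nth_default ?scale0r.
Qed.

Lemma lin_evalD (g h : {poly 'F_2}) (y : A) :
  lin_eval (g + h) y = lin_eval g y + lin_eval h y.
Proof.
pose n := maxn (size g) (size h).
rewrite !(@lin_eval_widen n) ?leq_maxl ?leq_maxr ?(leq_trans (size_polyD _ _)) //.
by rewrite -big_split; apply: eq_bigr => i _; rewrite coefD scalerDl.
Qed.

Lemma lin_evalZ c (g : {poly 'F_2}) (y : A) : lin_eval (c *: g) y = c *: lin_eval g y.
Proof.
rewrite (@lin_eval_widen (size g)) ?size_scale_leq // scaler_sumr.
by apply: eq_bigr => i _; rewrite coefZ scalerA.
Qed.

Lemma lin_evalB (g h : {poly 'F_2}) (y : A) :
  lin_eval (g - h) y = lin_eval g y - lin_eval h y.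
Proof. by rewrite lin_evalD -scaleN1r lin_evalZ scaleN1r. Qed.

Lemma lin_evalC c (y : A) : lin_eval c%:P y = c *: y.
Proof. by rewrite (@lin_eval_widen 1) ?size_polyC_leq1 // big_ord1 coefC. Qed.

Lemma lin_evalXn k (y : A) : lin_eval 'X^k y = y ^+ (2 ^ k).
Proof.
rewrite (@lin_eval_widen k.+1) ?size_polyXn // big_ord_recr /= big1.
  by rewrite coefXn eqxx scale1r add0r.
by move=> i _; rewrite coefXn ltn_eqF ?scale0r.
Qed.

Lemma lin_eval1 (y : A) : lin_eval 1 y = y.
Proof. by rewrite -(expr0 'X) lin_evalXn. Qed.

Lemma lin_eval_at0 (g : {poly 'F_2}) : lin_eval g 0 = 0.
Proof. by rewrite /lin_eval big1 // => i _; rewrite expr0n expn_eq0 scaler0. Qed.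

Lemma lin_eval_frobenius n (g : {poly 'F_2}) (y : A) :
  lin_eval g y ^+ (2 ^ n) = lin_eval g (y ^+ (2 ^ n)).
Proof.
have zero_frob : (0 : A) ^+ (2 ^ n) = 0 by rewrite expr0n expn_eq0.
rewrite (big_morph _ (frobeniusD n) zero_frob); apply: eq_bigr => i _.
by rewrite frobeniusZ -!exprM mulnC.
Qed.

Lemma lin_evalMX (g : {poly 'F_2}) (y : A) : lin_eval ('X * g) y = lin_eval g y ^+ 2.
Proof.
rewrite (@lin_eval_widen (size g).+1); last first.
  by rewrite (leq_trans (size_polyMleq _ _)) // size_polyX.
rewrite big_ord_recl coefXM scale0r add0r (lin_eval_frobenius 1).
by apply: eq_bigr => i _; rewrite coefXM /= -exprM -expnD.
Qed.

Lemma lin_evalM (g h : {poly 'F_2}) (y : A) :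
  lin_eval (g * h) y = lin_eval g (lin_eval h y).
Proof.
elim/poly_ind: g h => [|g c IHg] h; first by rewrite mul0r /lin_eval size_poly0 !big_ord0.
rewrite mulrDl -mulrA !lin_evalD IHg lin_evalMX mul_polyC lin_evalZ lin_evalC.
by rewrite [g * 'X]mulrC lin_evalMX -(lin_eval_frobenius 1).
Qed.

End Char2Algebra.

Lemma lin_eval_in_qpoly (h g y : {poly 'F_2}) :
  in_qpoly h (lin_eval g y) = lin_eval g (in_qpoly h y).
Proof.
rewrite (big_morph (in_qpoly h) (@in_qpolyD _ h) (@in_qpoly0 _ h)).
by apply: eq_bigr => i _; rewrite in_qpolyZ rmorphXn.
Qed.

Section CubeRootOfUnity.
Variables (A : comAlgType 'F_2) (z : A).
Hypothesis z_root : z ^+ 2 + z + 1 = 0.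

Lemma cube_root_frobenius i : z ^+ (2 ^ i) = if odd i then z ^+ 2 else z.
Proof.
have z_sqr : z ^+ 2 = z + 1.
  by apply/eqP; rewrite -subr_eq0 (oppr_pchar2 (pchar_F2alg A)) addrA z_root.
elim: i => [|i IHi]; first by rewrite expr1.
rewrite expnS mulnC exprM IHi /=; case: (odd i) => //=.
by rewrite z_sqr (frobeniusD 1) z_sqr expr1n -addrA addrr_F2alg addr0.
Qed.

Lemma cube_root_sqr_neq : z ^+ 2 != z.
Proof.
apply/eqP => z_sqr; move: z_root.
by rewrite z_sqr addrr_F2alg add0r => /eqP; rewrite oner_eq0.
Qed.

Lemma lin_eval_cube_root (g : {poly 'F_2}) :
  lin_eval g z = c_even g *: z + c_odd g *: z ^+ 2.
Proof.
rewrite /lin_eval (bigID (fun i : 'I_ _ => odd i)) addrC !scaler_suml /=.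
by congr (_ + _); apply: eq_bigr => i; rewrite cube_root_frobenius; case: (odd i).
Qed.

Lemma cube_root_lin_eval (g : {poly 'F_2}) : c_even g + c_odd g = 1 ->
  lin_eval g z ^+ 2 + lin_eval g z + 1 = 0.
Proof.
rewrite lin_eval_cube_root.
case: (F2_eq01 (c_even g)) (F2_eq01 (c_odd g)) => -> [] -> //=;
  rewrite ?scale0r ?scale1r ?add0r ?addr0 // => _.
by rewrite -exprM -[(2 * 2)%N]/(2 ^ 2)%N cube_root_frobenius /= [z + _]addrC.
Qed.

End CubeRootOfUnity.

Lemma c_even_add_odd (p : {poly 'F_2}) : c_even p + c_odd p = p.[1].
Proof.
rewrite horner_coef [RHS](bigID (fun j : 'I_ _ => odd j)) addrC.
by congr (_ + _); apply: eq_bigr => i _; rewrite expr1n mulr1.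
Qed.

Lemma deriv_lin_eval (g : {poly 'F_2}) : (lin_eval g 'X)^`() = (g`_0)%:P.
Proof.
rewrite (@lin_eval_widen _ (size g).+1) // big_ord_recl derivD.
rewrite (big_morph _ (@derivD _) (@deriv0 _)) big1 ?addr0.
  by rewrite derivZ expr1 derivX alg_polyC.
move=> i _; rewrite derivZ derivXn -[lift ord0 i : nat]/i.+1 expnSr mulrnA mulr2n.
by rewrite addrr_F2alg scaler0.
Qed.

Lemma irreducible_F2_monic (r : {poly 'F_2}) : irreducible_poly r -> r \is monic.
Proof. by move=> r_irr; apply/monicP/F2_eq1; rewrite lead_coef_eq0 irredp_neq0. Qed.

Lemma horner_irreducible_F2 (p : {poly 'F_2}) x :
  irreducible_poly p -> (2 < size p)%N -> p.[x] = 1.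
Proof.
move=> p_irr p_size; apply/F2_eq1/negP => /eqP px.
have : ('X - x%:P) %| p by rewrite -root_factor_theorem; apply/eqP.
case/(irredp_XsubCP p_irr) => [|/eqp_size]; first by rewrite -size_poly_eq1 size_XsubC.
by rewrite size_XsubC => p2; rewrite -p2 in p_size.
Qed.

Lemma in_qpoly_eq0 (h p : {poly 'F_2}) :
  h \is monic -> (1 < size h)%N -> (in_qpoly h p == 0) = (h %| p).
Proof.
move=> h_monic h_size; rewrite Pdiv.Idomain.dvdpE /Pdiv.Ring.rdvdp -val_eqE /=.
by rewrite /mk_monic h_size h_monic.
Qed.

Lemma coprimep_deriv_eq1 (F : fieldType) (p q : {poly F}) :
  (p * q)^`() = 1 -> coprimep p q.
Proof.
move=> pq'; apply/Bezout_eq1_coprimepP; exists (q^`(), p^`()).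
by rewrite -pq' derivM addrC [q^`() * p]mulrC.
Qed.

Lemma exists_irreducible_factor (F : finFieldType) (p : {poly F}) :
  (1 < size p)%N -> exists2 r, irreducible_poly r & r %| p.
Proof.
elim: {p}(size p) {-2}p (leqnn (size p)) => [|n IHn] p p_size p_gt1.
  by have := leq_trans p_gt1 p_size.
have [/irreducibleP p_irr | ] := boolP (irreducibleb p); first by exists p.
rewrite /irreducibleb p_gt1 => /forallPn [q].
rewrite negb_imply -Pdiv.Idomain.dvdpE -ltnNge => /andP [q_dvd q_gt1].
have q_size : (size q <= n)%N.
  have := size_npoly q; rewrite -ltnS (ltn_predK p_gt1) => q_lt.
  by rewrite -ltnS (leq_trans q_lt p_size).
by have [r r_irr r_q] := IHn q q_size q_gt1; exists r; rewrite ?(dvdp_trans r_q).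
Qed.

Lemma irreducible_poly_factor_size (F : finFieldType) (p : {poly F}) :
  (1 < size p)%N -> (forall r, irreducible_poly r -> r %| p -> (size p <= size r)%N) ->
  irreducible_poly p.
Proof.
move=> p_gt1 p_min; split=> // q q_size q_dvd.
have p_neq0 : p != 0 by rewrite -size_poly_gt0 ltnW.
have q_neq0 : q != 0.
  by apply: contraNneq p_neq0 => q0; move: q_dvd; rewrite q0 dvd0p.
have q_gt1 : (1 < size q)%N by rewrite ltn_neqAle eq_sym q_size size_poly_gt0.
have [r r_irr r_q] := exists_irreducible_factor q_gt1.
rewrite -dvdp_size_eqp // eqn_leq dvdp_leq //=.
exact: leq_trans (p_min r r_irr (dvdp_trans r_q q_dvd)) (dvdp_leq q_neq0 r_q).
Qed.

Lemma lin_eval_irreducible_dvdp (A : comAlgType 'F_2) (g h : {poly 'F_2}) (d : A) :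
  irreducible_poly g -> d != 0 -> lin_eval g d = 0 -> lin_eval h d = 0 -> g %| h.
Proof.
move=> g_irr d_neq0 g_d h_d; apply/negPn/negP => g_ndvd.
have /Bezout_eq1_coprimepP [[u v] /= uv1] : coprimep g h.
  by rewrite irreducible_poly_coprime.
move: d_neq0.
by rewrite -[d]lin_eval1 -uv1 lin_evalD !lin_evalM g_d h_d !lin_eval_at0 addr0 eqxx.
Qed.

Lemma primitive_poly_gt0 m (p : {poly 'F_2}) : primitive_poly m p -> (0 < m)%N.
Proof. by case=> _ p_size [p_gt1 _] _ _; rewrite -ltnS -p_size. Qed.

Lemma primitive_poly_dvdp_order m (p : {poly 'F_2}) k :
  primitive_poly m p -> p %| 'X^k - 1 -> (2 ^ m - 1 %| k)%N.
Proof.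
move=> p_prim; have [_ _ _ p_dvdN p_min] := p_prim.
have N_gt0 : (0 < 2 ^ m - 1)%N.
  by rewrite subn_gt0 -{1}(expn0 2) ltn_exp2l // (primitive_poly_gt0 p_prim).
set N := (2 ^ m - 1)%N in N_gt0 p_dvdN p_min *.
have Xk_split : 'X^k - 1 =
    'X^(k %% N) * ('X^(k %/ N * N) - 1) + ('X^(k %% N) - 1) :> {poly 'F_2}.
  by rewrite mulrBr mulr1 -exprD addrA subrK addnC -divn_eq.
have p_dvdNk : p %| 'X^(k %/ N * N) - 1 by rewrite mulnC exprM subrX1 dvdp_mulr.
rewrite Xk_split dvdp_addr ?dvdp_mull // => p_dvd_mod.
apply/eqP; case: (posnP (k %% N)) => // mod_gt0.
by have := p_min (k %% N)%N; rewrite mod_gt0 ltn_pmod // p_dvd_mod => /(_ isT).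
Qed.

Lemma frobenius_fixed_dvdn (K : fieldExtType 'F_2) m (lbar : {poly 'F_2}) (b : K) k :
  primitive_poly m lbar ->
  lin_eval lbar b ^+ 2 + lin_eval lbar b + 1 = 0 -> b ^+ 2 + b + 1 != 0 ->
  b ^+ (2 ^ k) = b -> (2 * (2 ^ m - 1) %| k)%N.
Proof.
move=> lbar_prim w_root b_nroot b_fixed; have [_ _ lbar_irr _ _] := lbar_prim.
set w := lin_eval lbar b in w_root.
have w_fixed : w ^+ (2 ^ k) = w by rewrite /w lin_eval_frobenius b_fixed.
have k_even : ~~ odd k.
  apply: contra (cube_root_sqr_neq w_root) => k_odd.
  by rewrite -{2}w_fixed (cube_root_frobenius w_root) k_odd.
have b_sqr_neq : b ^+ 2 + b != 0.
  apply: contra (cube_root_sqr_neq w_root).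
  rewrite addr_eq0 (oppr_pchar2 (pchar_F2alg K)) => /eqP b_sqr.
  by rewrite /w (lin_eval_frobenius 1) b_sqr.
pose d := lin_eval ('X^2 + 1) b.
have d_neq0 : d != 0.
  by rewrite /d lin_evalD lin_evalXn lin_eval1 expr4D_F2alg mulf_neq0.
have lbar_d : lin_eval lbar d = 0.
  rewrite -lin_evalM mulrC lin_evalM lin_evalD lin_evalXn lin_eval1 -/w.
  by rewrite (cube_root_frobenius w_root 2) addrr_F2alg.
have Xk_d : lin_eval ('X^k - 1) d = 0.
  rewrite -lin_evalM mulrC lin_evalM lin_evalB lin_evalXn lin_eval1.
  by rewrite b_fixed subrr lin_eval_at0.
have N_k := primitive_poly_dvdp_order lbar_prim
  (lin_eval_irreducible_dvdp lbar_irr d_neq0 lbar_d Xk_d).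
rewrite Gauss_dvd ?dvdn2 ?k_even ?N_k // coprime2n.
by rewrite oddB ?expn_gt0 // oddX (gtn_eqF (primitive_poly_gt0 lbar_prim)).
Qed.

Local Notation Phi3 := ('X^2 + 'X + 1 : {poly 'F_2}).

Lemma size_Phi3 : size Phi3 = 3%N.
Proof. by rewrite -addrA -polyC1 size_polyDl ?size_polyXn // size_XaddC. Qed.

Lemma Phi3_monic : Phi3 \is monic.
Proof.
apply/monicP; rewrite -addrA -polyC1 lead_coefDl ?lead_coefXn //.
by rewrite size_XaddC size_polyXn.
Qed.

Lemma Phi3_dvdp_lin_eval (g : {poly 'F_2}) : c_even g + c_odd g = 1 ->
  Phi3 %| lin_eval g 'X ^+ 2 + lin_eval g 'X + 1.
Proof.
move=> c_sum; rewrite -in_qpoly_eq0 ?Phi3_monic ?size_Phi3 //.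
have /eqP : in_qpoly Phi3 Phi3 == 0 by rewrite in_qpoly_eq0 ?Phi3_monic ?size_Phi3.
rewrite !rmorphD !rmorphXn !rmorph1 /= lin_eval_in_qpoly => X_root.
by rewrite (cube_root_lin_eval X_root c_sum).
Qed.

Lemma size_lin_eval_X m (g : {poly 'F_2}) :
  size g = m.+1 -> size (lin_eval g 'X) = (2 ^ m).+1.
Proof.
move=> g_size; rewrite (@lin_eval_widen _ m.+1) ?g_size // big_ord_recr /=.
have -> : g`_m = 1.
  have := lead_coef_eq0 g; rewrite lead_coefE -size_poly_eq0 g_size => lead_g.
  by apply/F2_eq1; rewrite lead_g.
rewrite scale1r addrC size_polyDl size_polyXn // ltnS.
apply: (big_ind (fun q : {poly 'F_2} => size q <= 2 ^ m)%N) => [|p q|i _].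
- by rewrite size_poly0.
- by move=> p_le q_le; rewrite (leq_trans (size_polyD _ _)) // geq_max p_le q_le.
- by rewrite (leq_trans (size_scale_leq _ _)) // size_polyXn ltn_exp2l.
Qed.

Lemma size_Phi3_quotient n (l : {poly 'F_2}) :
  size l = n.+2 -> size ((l ^+ 2 + l + 1) %/ Phi3) = (2 * n).+1.
Proof.
move=> l_size.
have l2_size : size (l ^+ 2) = (2 * n).+3.
  have l_neq0 : l != 0 by rewrite -size_poly_eq0 l_size.
  rewrite -[size _]prednK ?size_poly_gt0 ?expf_neq0 // size_exp l_size.
  by rewrite mulnC mulnS add2n.
have F_size : size (l ^+ 2 + l + 1) = (2 * n).+3.
  rewrite -addrA size_polyDl l2_size // ltnS (leq_trans (size_polyD _ _)) //.
  by rewrite l_size size_poly1 geq_max !ltnS leq_pmull.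
by rewrite size_divp -?size_poly_eq0 size_Phi3 // F_size.
Qed.

Lemma irreducible_factor_size m (lbar r : {poly 'F_2}) :
  (2 <= m)%N -> primitive_poly m lbar -> irreducible_poly r ->
  r %| (lin_eval lbar 'X ^+ 2 + lin_eval lbar 'X + 1) %/ Phi3 ->
  ((2 * (2 ^ m - 1)).+1 <= size r)%N.
Proof.
move=> m_ge2 lbar_prim r_irr r_Q; have [_ lbar_size lbar_irr _ _] := lbar_prim.
have lbar_noroot x : lbar.[x] = 1.
  by apply: horner_irreducible_F2; rewrite // lbar_size ltnS.
set l := lin_eval lbar 'X in r_Q *.
set Q := _ %/ Phi3 in r_Q.
have Q_Phi3 : l ^+ 2 + l + 1 = Q * Phi3.
  by rewrite divpK // Phi3_dvdp_lin_eval // c_even_add_odd lbar_noroot.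
have Q_Phi3_coprime : coprimep Q Phi3.
  apply: coprimep_deriv_eq1; rewrite -Q_Phi3 !derivD deriv_exp /= mulr2n addrr_F2alg.
  by rewrite deriv_lin_eval -horner_coef0 lbar_noroot derivC add0r addr0.
have r_gt1 : (1 < size r)%N by case: r_irr.
have r_mi : monic_irreducible_poly r := (r_irr, irreducible_F2_monic r_irr).
pose b : {poly %/ r with r_mi} := in_qpoly r 'X.
have w_root : lin_eval lbar b ^+ 2 + lin_eval lbar b + 1 = 0.
  have : in_qpoly r (l ^+ 2 + l + 1) == 0.
    by rewrite in_qpoly_eq0 ?r_mi.2 // Q_Phi3 dvdp_mulr.
  by rewrite !rmorphD rmorphXn rmorph1 /= lin_eval_in_qpoly => /eqP.
have b_nroot : b ^+ 2 + b + 1 != 0.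
  have : ~~ (r %| Phi3).
    apply: contraTN r_gt1 => r_Phi3; rewrite -leqNgt leq_eqVlt -coprimepp.
    by rewrite (coprimep_dvdl r_Phi3) ?(coprimep_dvdr r_Q).
  by rewrite -in_qpoly_eq0 ?r_mi.2 // !rmorphD rmorphXn rmorph1.
have b_fixed : b ^+ (2 ^ (size r).-1) = b.
  have K_card : #|{poly %/ r with r_mi}| = (2 ^ (size r).-1)%N.
    by rewrite card_qfpoly card_Fp.
  by rewrite -K_card expf_card.
rewrite -(ltn_predK r_gt1) ltnS; apply: dvdn_leq; first by rewrite -subn1 subn_gt0.
exact: frobenius_fixed_dvdn lbar_prim w_root b_nroot b_fixed.
Qed.

Theorem mainTheorem9 (m : nat) (lbar : {poly 'F_2}) :
  (2 <= m)%N -> primitive_poly m lbar ->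
  let l := linearized lbar in
  ((c_even lbar == 0) (+) (c_odd lbar == 0)) /\
  ('X^2 + 'X + 1 %| l ^+ 2 + l + 1) /\
  irreducible_poly ((l ^+ 2 + l + 1) %/ ('X^2 + 'X + 1)) /\
  size ((l ^+ 2 + l + 1) %/ ('X^2 + 'X + 1)) = (2 * (2 ^ m - 1)).+1.
Proof.
move=> m_ge2 lbar_prim l; have [_ lbar_size lbar_irr _ _] := lbar_prim.
have c_sum : c_even lbar + c_odd lbar = 1.
  by rewrite c_even_add_odd horner_irreducible_F2 // lbar_size ltnS.
have Q_size : size ((l ^+ 2 + l + 1) %/ Phi3) = (2 * (2 ^ m - 1)).+1.
  apply: size_Phi3_quotient.
  by rewrite (size_lin_eval_X lbar_size) subn1 prednK ?expn_gt0.
split; first exact: F2_addr_eq1.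
split; first exact: Phi3_dvdp_lin_eval.
split=> //; apply: irreducible_poly_factor_size => [|r r_irr r_Q].
  by rewrite Q_size ltnS muln_gt0 /= subn_gt0 -{1}(expn0 2) ltn_exp2l // ltnW.
by rewrite Q_size (irreducible_factor_size m_ge2 lbar_prim r_irr r_Q).
Qed.
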